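(* Let $b^2>a^2>0$, $\theta\in[0,1]$, $s\ge0$, and let $u=(u^{(1)},u^{(2)},u^{(3)})^{\mathrm T}$ solve $$u_{tt}-a^2\Delta u-(b^2-a^2)\nabla\operatorname{div}u+(-\Delta)^{\theta}u_t=0\ \text{ on }(0,\infty)\times\mathbb{R}^3,\qquad (u,u_t)(0,\cdot)=(u_0,u_1),$$ with $(u_0^{(k)},u_1^{(k)})\in\dot H^{s+1}(\mathbb{R}^3)\times\dot H^s(\mathbb{R}^3)$ for $k=1,2,3$. Then for $k=1,2,3$ and $t\ge0$, $$\||D|^{s+1}u^{(k)}(t,\cdot)\|_{L^2}+\||D|^su^{(k)}_t(t,\cdot)\|_{L^2}\lesssim\sum_{j=1}^3\big\|(u^{(j)}_0,u^{(j)}_1)\big\|_{\dot H^{s+1}\times\dot H^s}.$$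
   Context: $(-\Delta)^\theta$ and $|D|^s$ are the Fourier multipliers with symbols $|\xi|^{2\theta}$ and $|\xi|^s$; $\dot H^s$ are homogeneous Sobolev spaces. $f\lesssim g$ means $f\le Cg$ with $C$ independent of $t$ and the data. *)

From HB Require Import structures.
From mathcomp Require Import all_boot all_order all_algebra.
From mathcomp Require Import all_classical all_reals all_analysis.
Set Implicit Arguments. Unset Strict Implicit. Unset Printing Implicit Defensive.
Import Order.TTheory GRing.Theory Num.Theory.
Import numFieldNormedType.Exports.
Local Open Scope classical_set_scope.
Local Open Scope ring_scope.

Definition R3 (R : realType) := ((R * R) * R)%type.

Definition leb3 (R : realType) :=
  ((@lebesgue_measure R \x @lebesgue_measure R) \x @lebesgue_measure R)%E.

Definition coord3 (R : realType) (xi : R3 R) (k : 'I_3) : R :=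
  match val k with 0%N => xi.1.1 | 1%N => xi.1.2 | _ => xi.2 end.

Definition norm3 (R : realType) (xi : R3 R) : R :=
  Num.sqrt (\sum_(j < 3) coord3 xi j ^+ 2).

(* A C^3-valued function of xi is represented by its real (p = false) and
   imaginary (p = true) parts: v xi p k = Re/Im of the k-th component. *)
Definition cfield (R : realType) := R3 R -> bool -> 'I_3 -> R.

Definition cabs2 (R : realType) (v : cfield R) (xi : R3 R) (k : 'I_3) : R :=
  v xi false k ^+ 2 + v xi true k ^+ 2.

(* Squared homogeneous Sobolev norm, on the Fourier side:
   || |D|^s f ||_{L^2}^2 = c * \int |xi|^{2s} |\hat f(xi)|^2 dxi
   (the Plancherel constant c is irrelevant for a "lesssim" estimate). *)
Definition hdot2 (R : realType) (s : R) (v : cfield R) (k : 'I_3) : \bar R :=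
  (\int[@leb3 R]_(xi in setT) ((norm3 xi) `^ (2 * s) * cabs2 v xi k)%:E)%E.

Definition hdot (R : realType) (s : R) (v : cfield R) (k : 'I_3) : \bar R :=
  poweR (hdot2 s v k) (2^-1).

Definition hdot_pair (R : realType) (s : R) (f g : cfield R) (k : 'I_3) : \bar R :=
  poweR (hdot2 (s + 1) f k + hdot2 s g k)%E (2^-1).

(* The Fourier-transformed system: for each fixed xi, with w = \hat u(t, xi),
   w'' + a^2 |xi|^2 w + (b^2 - a^2) xi (xi . w) + |xi|^{2 theta} w' = 0,
   which is the Fourier symbol of
   u_tt - a^2 Delta u - (b^2-a^2) grad div u + (-Delta)^theta u_t = 0. *)
Definition lame_symbol (R : realType) (a b theta : R) (xi : R3 R)
    (w w' w'' : bool -> 'I_3 -> R) : Prop :=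
  forall (p : bool) (k : 'I_3),
    w'' p k + a ^+ 2 * norm3 xi ^+ 2 * w p k
    + (b ^+ 2 - a ^+ 2) * coord3 xi k * (\sum_(j < 3) coord3 xi j * w p j)
    + (norm3 xi) `^ (2 * theta) * w' p k = 0.

(* (U, Ut) is a (classical in time, Fourier side) solution with data (u0, u1):
   U t = \hat u(t, .), Ut t = \hat u_t(t, .). *)
Definition is_lame_solution (R : realType) (a b theta : R)
    (u0 u1 : cfield R) (U Ut : R -> cfield R) : Prop :=
  [/\ forall xi p k, U 0 xi p k = u0 xi p k,
      forall xi p k, Ut 0 xi p k = u1 xi p k,
      forall xi p k, U t xi p k @[t --> 0^'+] --> U 0 xi p k,
      forall xi p k, Ut t xi p k @[t --> 0^'+] --> Ut 0 xi p k &
      forall t : R, 0 < t -> forall xi : R3 R,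
        exists Utt : bool -> 'I_3 -> R,
          (forall p k, is_derive t (1:R) (fun r : R => U r xi p k) (Ut t xi p k)) /\
          (forall p k, is_derive t (1:R) (fun r : R => Ut r xi p k) (Utt p k)) /\
          lame_symbol a b theta xi (U t xi) (Ut t xi) Utt].

Definition in_hdot_pair (R : realType) (s : R) (f g : cfield R) : Prop :=
  forall k : 'I_3,
    [/\ forall p, measurable_fun setT (fun xi => f xi p k),
        forall p, measurable_fun setT (fun xi => g xi p k),
        (hdot2 (s + 1) f k < +oo)%E & (hdot2 s g k < +oo)%E].

(* For fixed xi, the real and the imaginary part w of the Fourier transform of u
   solve the damped system  w'' + a^2|xi|^2 w + (b^2 - a^2) xi (xi.w) + |xi|^(2 theta) w' = 0,
   whose energy  |w'|^2 + a^2|xi|^2 |w|^2 + (b^2 - a^2) (xi.w)^2  has derivative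
   -2 |xi|^(2 theta) |w'|^2 <= 0.  The energy at time t dominates
   |w_k'|^2 + a^2|xi|^2 |w_k|^2, and by Cauchy-Schwarz the energy at time 0 is at most
   |w'(0)|^2 + b^2|xi|^2 |w(0)|^2.  This pointwise bound, uniform in t and xi, is
   multiplied by |xi|^(2s) and integrated; square roots are then taken using the
   subadditivity of the square root. *)

From mathcomp Require Import all_boot all_order all_algebra.
From mathcomp Require Import all_classical all_reals all_analysis.
From mathcomp Require Import ring lra measurable_realfun.
Set Implicit Arguments. Unset Strict Implicit. Unset Printing Implicit Defensive.
Import Order.TTheory GRing.Theory Num.Theory.
Import numFieldNormedType.Exports.
Local Open Scope classical_set_scope.
Local Open Scope ring_scope.

Definition dot (R : pzSemiRingType) n (y z : 'I_n -> R) : R := \sum_(j < n) y j * z j.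

Section dot.
Variables (R : realFieldType) (n : nat).
Implicit Types y z : 'I_n -> R.

Lemma dotC y z : dot y z = dot z y.
Proof. by apply: eq_bigr => j _; rewrite mulrC. Qed.

Lemma sqr_le_dot y k : y k ^+ 2 <= dot y y.
Proof.
rewrite /dot (bigD1 k) //= -expr2 lerDl.
by apply: sumr_ge0 => j _; rewrite -expr2 sqr_ge0.
Qed.

Lemma dot_ge0 y : 0 <= dot y y.
Proof. by apply: sumr_ge0 => j _; rewrite -expr2 sqr_ge0. Qed.

Lemma dot_Lagrange y z :
  (dot y y * dot z z - dot y z ^+ 2) *+ 2 =
  \sum_(i < n) \sum_(j < n) (y i * z j - y j * z i) ^+ 2.
Proof.
have yy_zz : dot y y * dot z z = \sum_(i < n) \sum_(j < n) y i ^+ 2 * z j ^+ 2.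
  by rewrite big_distrlr; apply: eq_bigr => i _; apply: eq_bigr => j _; rewrite !expr2.
have yy_zz_swap : dot y y * dot z z = \sum_(i < n) \sum_(j < n) y j ^+ 2 * z i ^+ 2.
  rewrite [LHS]mulrC big_distrlr; apply: eq_bigr => i _; apply: eq_bigr => j _.
  by rewrite /= !expr2 mulrC.
have yz_sqr : dot y z ^+ 2 = \sum_(i < n) \sum_(j < n) (y i * z i) * (y j * z j).
  by rewrite expr2 big_distrlr.
rewrite mulr2n {1}yy_zz yy_zz_swap yz_sqr -!sumrB -big_split /=; apply: eq_bigr => i _.
by rewrite -!sumrB -big_split /=; apply: eq_bigr => j _; ring.
Qed.

Lemma dot_CauchySchwarz y z : dot y z ^+ 2 <= dot y y * dot z z.
Proof.
rewrite -subr_ge0 -(pmulrn_lge0 _ (isT : (0 < 2)%N)) dot_Lagrange.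
by do 2!apply: sumr_ge0 => ? _; rewrite sqr_ge0.
Qed.
End dot.

Section dot_derivative.
Variables (R : realType) (n : nat).

Lemma is_derive_dot (f g : R -> 'I_n -> R) (df dg : 'I_n -> R) (t : R) :
  (forall k, is_derive t 1 (f ^~ k) (df k)) ->
  (forall k, is_derive t 1 (g ^~ k) (dg k)) ->
  is_derive t 1 (fun r => dot (f r) (g r)) (dot (f t) dg + dot df (g t)).
Proof.
move=> f' g'; have := is_derive_sum (fun k => is_deriveM (f' k) (g' k)).
have -> : \sum_(k < n) (f ^~ k * g ^~ k) = (fun r => dot (f r) (g r)).
  by apply/funext => r; rewrite /dot fct_sumE.
move/is_derive_eq; apply.
by rewrite /dot -big_split; apply: eq_bigr => k _; rewrite /= [df k * _]mulrC.
Qed.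

Lemma is_derive_dotl (x : 'I_n -> R) (g : R -> 'I_n -> R) (dg : 'I_n -> R) (t : R) :
  (forall k, is_derive t 1 (g ^~ k) (dg k)) ->
  is_derive t 1 (fun r => dot x (g r)) (dot x dg).
Proof.
move=> g'; have := is_derive_dot (fun k => is_derive_cst (x k) t 1) g'.
move/is_derive_eq; apply.
by rewrite [X in _ + X]big1 ?addr0 // => k _; rewrite mul0r.
Qed.

Lemma cvg_dot (T : Type) (F : set_system T) (FF : Filter F)
    (f g : T -> 'I_n -> R) (f0 g0 : 'I_n -> R) :
  (forall k, f r k @[r --> F] --> f0 k) -> (forall k, g r k @[r --> F] --> g0 k) ->
  dot (f r) (g r) @[r --> F] --> dot f0 g0.
Proof.
move=> fF gF; apply: cvg_big => [|k _]; first exact: add_continuous.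
exact: cvgM.
Qed.

End dot_derivative.

Section damped_energy.
Variables (R : realType) (n : nat) (A B c : R) (x : 'I_n -> R) (w v : R -> 'I_n -> R).

Definition damped_energy (r : R) : R :=
  dot (v r) (v r) + A * dot (w r) (w r) + B * dot x (w r) ^+ 2.

Lemma is_derive_damped_energy (t : R) (acc : 'I_n -> R) :
  (forall k, is_derive t 1 (w ^~ k) (v t k)) ->
  (forall k, is_derive t 1 (v ^~ k) (acc k)) ->
  (forall k, acc k + A * w t k + B * x k * dot x (w t) + c * v t k = 0) ->
  is_derive t 1 damped_energy (- (c * dot (v t) (v t)) *+ 2).
Proof.
move=> w' v' eq_motion.
have := is_deriveD (is_deriveD (is_derive_dot v' v') (is_deriveZ A (is_derive_dot w' w')))
  (is_deriveZ B (is_deriveX 2 (is_derive_dotl x w'))).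
move/is_derive_eq; apply.
set S := dot x (w t) in eq_motion *; clearbody S.
rewrite /GRing.scale /= expr1 (dotC acc) (dotC (v t) (w t)).
apply/eqP; rewrite -subr_eq0; apply/eqP.
(* E' + 2c|v|^2 is the sum over k of 2 v_k times the k-th equation of motion. *)
transitivity (\sum_(k < n) (v t k * (acc k + A * w t k + B * x k * S + c * v t k)) *+ 2).
  rewrite /dot !mulrDr !mulr_sumr -sumrN -!sumrMnl -!big_split -sumrB /=.
  by apply: eq_bigr => k _; ring.
by rewrite big1 // => k _; rewrite eq_motion mulr0 mul0rn.
Qed.

Lemma damped_energy_ge (r : R) (k : 'I_n) : 0 <= A -> 0 <= B ->
  v r k ^+ 2 + A * w r k ^+ 2 <= damped_energy r.
Proof.
move=> A0 B0; rewrite /damped_energy -addrA lerD ?sqr_le_dot //.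
by rewrite -[leLHS]addr0 lerD ?ler_wpM2l ?sqr_le_dot // mulr_ge0 ?sqr_ge0.
Qed.

Lemma damped_energy_le (r : R) : 0 <= B ->
  damped_energy r <= dot (v r) (v r) + (A + B * dot x x) * dot (w r) (w r).
Proof.
move=> B0; rewrite /damped_energy -addrA lerD // mulrDl lerD // -mulrA.
by rewrite ler_wpM2l // dot_CauchySchwarz.
Qed.

Hypothesis c_ge0 : 0 <= c.
Hypothesis w_cvg0 : forall k, w r k @[r --> 0^'+] --> w 0 k.
Hypothesis v_cvg0 : forall k, v r k @[r --> 0^'+] --> v 0 k.
Hypothesis motion : forall t : R, 0 < t -> exists acc : 'I_n -> R,
  [/\ forall k, is_derive t 1 (w ^~ k) (v t k),
      forall k, is_derive t 1 (v ^~ k) (acc k) &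
      forall k, acc k + A * w t k + B * x k * dot x (w t) + c * v t k = 0].

Lemma damped_energy_cvg0 : damped_energy r @[r --> 0^'+] --> damped_energy 0.
Proof.
rewrite /damped_energy; apply: cvgD; first apply: cvgD; first exact: cvg_dot.
- by apply: cvgMr; exact: cvg_dot.
- by apply: cvgMr; rewrite expr2; apply: cvgM; apply: cvg_dot => // k; exact: cvg_cst.
Qed.

Lemma damped_energy_nonincreasing (t : R) : 0 <= t -> damped_energy t <= damped_energy 0.
Proof.
have derive_le0 (r : R) : 0 < r -> exists2 d, is_derive r 1 damped_energy d & d <= 0.
  move=> r0; have [acc [w' v' eq_motion]] := motion r0.
  exists (- (c * dot (v r) (v r)) *+ 2); first exact: is_derive_damped_energy.
  by rewrite mulNrn oppr_le0 mulrn_wge0 // mulr_ge0 // dot_ge0.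
have derivable_energy (r : R) : r \in `]0, +oo[ -> derivable damped_energy r 1.
  by rewrite in_itv /= andbT => /derive_le0 [d []].
move=> t0; apply: (ler0_derive1_nincry derivable_energy _ _ (lexx 0) t0).
- move=> r; rewrite in_itv /= andbT => /derive_le0 [d d' d0].
  by rewrite derive1E derive_val.
- exact/derivable_oy_Rcontinuous_within_itvcy/(conj derivable_energy damped_energy_cvg0).
Qed.

End damped_energy.

Lemma ler_unweighted_sum (R : realFieldType) (al be V W P Q : R) :
  0 < al -> 0 <= be -> 0 <= V -> 0 <= W -> 0 <= P -> 0 <= Q -> V + al * W <= P + be * Q ->
  V + W <= (1 + al^-1) * (1 + be) * (P + Q).
Proof.
move=> al0 be0 V0 W0 P0 Q0 h; have ial0 : 0 <= al^-1 by rewrite invr_ge0 ltW.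
have expand : (1 + al^-1) * (V + al * W) = V + W + (al^-1 * V + al * W).
  by field; rewrite gt_eqF.
apply: (@le_trans _ _ ((1 + al^-1) * (V + al * W))).
  by rewrite expand lerDl; apply: addr_ge0; apply: mulr_ge0 => //; exact: ltW.
by rewrite -mulrA ler_wpM2l ?addr_ge0 //; nra.
Qed.

Lemma powR_2mulD1 (R : realType) (y r : R) : 0 <= y -> 0 <= r ->
  y `^ (2 * (r + 1)) = y `^ (2 * r) * y ^+ 2.
Proof.
move=> y0 r0; rewrite mulrDr mulr1 powRD ?powR_mulrn //.
by rewrite gt_eqF // ltr_wpDl ?mulr_ge0.
Qed.

Lemma sqrtrD_le (R : rcfType) (x y : R) : 0 <= x -> 0 <= y ->
  Num.sqrt (x + y) <= Num.sqrt x + Num.sqrt y.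
Proof.
move=> x0 y0; rewrite -[leRHS]ger0_norm ?addr_ge0 ?sqrtr_ge0 // -sqrtr_sqr.
rewrite ler_sqrt ?sqr_ge0 // sqrrD !sqr_sqrtr // -addrA lerD2l lerDr.
by rewrite mulrn_wge0 // mulr_ge0 ?sqrtr_ge0.
Qed.

Lemma sqrteD_le (R : rcfType) (x y : \bar R) : (0 <= x)%E -> (0 <= y)%E ->
  (sqrte (x + y) <= sqrte x + sqrte y)%E.
Proof.
by case: x y => [x| |] [y| |] //= x0 y0; rewrite lee_fin sqrtrD_le.
Qed.

Lemma sqrte_sum_le (R : rcfType) (I : Type) (r : seq I) (F : I -> \bar R) :
  (forall i, 0 <= F i)%E -> (sqrte (\sum_(i <- r) F i) <= \sum_(i <- r) sqrte (F i))%E.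
Proof.
move=> F0; elim: r => [|i r IH]; first by rewrite !big_nil sqrte0.
rewrite !big_cons; apply: le_trans (sqrteD_le (F0 i) (sume_ge0 _ _)) _ => //.
exact: leeD2l.
Qed.

(* Unlike [ge0_le_integral], no measurability is required: the solution is not
   assumed to be measurable in xi. *)
Lemma ge0_le_integralT d (T : measurableType d) (R : realType)
    (mu : {measure set T -> \bar R}) (f g : T -> \bar R) :
  (forall x, 0 <= f x)%E -> (forall x, f x <= g x)%E ->
  (\int[mu]_(x in setT) f x <= \int[mu]_(x in setT) g x)%E.
Proof.
move=> f0 fg; have g0 x : (0 <= g x)%E := le_trans (f0 x) (fg x).
rewrite !ge0_integralTE //; apply: le_ereal_sup => _ [h hf <-].
by exists h => // x; exact: le_trans (hf x) (fg x).
Qed.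

Definition lame_const (R : realType) (a b : R) : R := (1 + (a ^+ 2)^-1) * (1 + b ^+ 2).

Definition data_density (R : realType) (s : R) (u0 u1 : cfield R) (xi : R3 R) : R :=
  \sum_(j < 3)
    (norm3 xi `^ (2 * (s + 1)) * cabs2 u0 xi j + norm3 xi `^ (2 * s) * cabs2 u1 xi j).

Lemma cabs2_ge0 (R : realType) (u : cfield R) xi k : 0 <= cabs2 u xi k.
Proof. by rewrite addr_ge0 ?sqr_ge0. Qed.

Lemma norm3_sq (R : realType) (xi : R3 R) : norm3 xi ^+ 2 = dot (coord3 xi) (coord3 xi).
Proof. exact/sqr_sqrtr/dot_ge0. Qed.

Section lame_energy.
Variables (R : realType) (a b theta : R) (u0 u1 : cfield R) (U Ut : R -> cfield R).
Hypothesis a2_gt0 : 0 < a ^+ 2.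
Hypothesis a2_le_b2 : a ^+ 2 <= b ^+ 2.
Hypothesis sol : is_lame_solution a b theta u0 u1 U Ut.

Lemma lame_mode_energy (xi : R3 R) (p : bool) (k : 'I_3) (t : R) : 0 <= t ->
  Ut t xi p k ^+ 2 + a ^+ 2 * norm3 xi ^+ 2 * U t xi p k ^+ 2 <=
  dot (u1 xi p) (u1 xi p) + b ^+ 2 * norm3 xi ^+ 2 * dot (u0 xi p) (u0 xi p).
Proof.
move=> t0; have [U0 Ut0 U_cvg0 Ut_cvg0 motion] := sol.
pose w r := U r xi p; pose v r := Ut r xi p.
have A0 : 0 <= a ^+ 2 * norm3 xi ^+ 2 by rewrite mulr_ge0 ?sqr_ge0.
have B0 : 0 <= b ^+ 2 - a ^+ 2 by rewrite subr_ge0.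
set E := damped_energy (a ^+ 2 * norm3 xi ^+ 2) (b ^+ 2 - a ^+ 2) (coord3 xi) w v.
have decay : E t <= E 0.
  apply: (damped_energy_nonincreasing (powR_ge0 (norm3 xi) (2 * theta))
    (U_cvg0 xi p) (Ut_cvg0 xi p) _ t0).
  move=> r r0; have [Utt [U' [Ut' eq_motion]]] := motion r r0 xi.
  by exists (Utt p); split => j; [exact: U' | exact: Ut' | exact: eq_motion].
apply: le_trans (damped_energy_ge (coord3 xi) w v t k A0 B0) _.
apply: le_trans decay _; apply: le_trans (damped_energy_le _ _ _ _ 0 B0) _.
have -> : v 0 = u1 xi p by apply/funext => j; exact: Ut0.
have -> : w 0 = u0 xi p by apply/funext => j; exact: U0.
by rewrite -norm3_sq lerD // ler_wpM2r ?dot_ge0 // -mulrDl subrKC.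
Qed.

Lemma lame_energy_estimate (xi : R3 R) (k : 'I_3) (t : R) : 0 <= t ->
  cabs2 (Ut t) xi k + a ^+ 2 * norm3 xi ^+ 2 * cabs2 (U t) xi k <=
  \sum_(j < 3) cabs2 u1 xi j + b ^+ 2 * norm3 xi ^+ 2 * \sum_(j < 3) cabs2 u0 xi j.
Proof.
move=> t0; have := lerD (lame_mode_energy xi false k t0) (lame_mode_energy xi true k t0).
have sum_modes (u : cfield R) :
    \sum_(j < 3) cabs2 u xi j = dot (u xi false) (u xi false) + dot (u xi true) (u xi true).
  by rewrite -big_split.
rewrite !sum_modes /cabs2; lra.
Qed.

Lemma lame_weighted_estimate (s : R) (xi : R3 R) (k : 'I_3) (t : R) : 0 <= s -> 0 <= t ->
  norm3 xi `^ (2 * (s + 1)) * cabs2 (U t) xi k + norm3 xi `^ (2 * s) * cabs2 (Ut t) xi k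
  <= lame_const a b * data_density s u0 u1 xi.
Proof.
move=> s0 t0; have n0 : 0 <= norm3 xi := sqrtr_ge0 _.
have sum_ge0 (u : cfield R) : 0 <= \sum_(j < 3) cabs2 u xi j.
  by apply: sumr_ge0 => j _; exact: cabs2_ge0.
have unweighted : cabs2 (Ut t) xi k + norm3 xi ^+ 2 * cabs2 (U t) xi k <=
    lame_const a b * (\sum_(j < 3) cabs2 u1 xi j + norm3 xi ^+ 2 * \sum_(j < 3) cabs2 u0 xi j).
  apply: ler_unweighted_sum; do ?[done | exact: sqr_ge0 | exact: cabs2_ge0 | apply: mulr_ge0].
  by rewrite [a ^+ 2 * _]mulrA [b ^+ 2 * _]mulrA; exact: lame_energy_estimate.
have -> : data_density s u0 u1 xi = norm3 xi `^ (2 * s) *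
    (\sum_(j < 3) cabs2 u1 xi j + norm3 xi ^+ 2 * \sum_(j < 3) cabs2 u0 xi j).
  rewrite /data_density mulr_sumr -big_split mulr_sumr /=.
  by apply: eq_bigr => j _; rewrite powR_2mulD1 //; ring.
rewrite powR_2mulD1 // -mulrA -mulrDr mulrCA ler_wpM2l ?powR_ge0 //.
by rewrite addrC; exact: unweighted.
Qed.
End lame_energy.

Section sobolev_norms.
Variable R : realType.
Local Notation cfield := (cfield R).

Lemma measurable_norm3_powR (r : R) : measurable_fun setT (fun xi : R3 R => norm3 xi `^ r).
Proof.
have -> : (fun xi : R3 R => norm3 xi `^ r) = (fun y => y `^ r) \o (@Num.sqrt R) \o
    (fun xi : R3 R => xi.1.1 ^+ 2 + xi.1.2 ^+ 2 + xi.2 ^+ 2)%R.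
  by apply/funext => xi; rewrite /norm3 /= !big_ord_recr big_ord0 /= add0r.
apply: measurableT_comp; first apply: measurableT_comp.
- exact: measurable_powR.
- apply: continuous_measurable_fun; exact: sqrt_continuous.
apply: measurable_funD; first apply: measurable_funD; apply: measurable_funX.
- exact: measurableT_comp measurable_fst measurable_fst.
- exact: measurableT_comp measurable_snd measurable_fst.
- exact: measurable_snd.
Qed.

Lemma weighted_cabs2_ge0 (r : R) (u : cfield) xi k :
  (0 <= (norm3 xi `^ r * cabs2 u xi k)%:E)%E.
Proof. by rewrite lee_fin mulr_ge0 ?powR_ge0 ?cabs2_ge0. Qed.

Lemma measurable_weighted_cabs2 (r : R) (u : cfield) (k : 'I_3) :
  (forall p, measurable_fun setT (fun xi => u xi p k)) ->
  measurable_fun setT (fun xi => norm3 xi `^ r * cabs2 u xi k).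
Proof.
move=> mu; apply: measurable_funM; first exact: measurable_norm3_powR.
by apply: measurable_funD; apply: measurable_funX.
Qed.

Lemma hdot2_ge0 (r : R) (v : cfield) k : (0 <= hdot2 r v k)%E.
Proof. by apply: integral_ge0 => xi _; exact: weighted_cabs2_ge0. Qed.

Lemma hdotE (r : R) (v : cfield) k : hdot r v k = sqrte (hdot2 r v k).
Proof. exact/poweR12_sqrt/hdot2_ge0. Qed.

Lemma hdot_pairE (s : R) (f g : cfield) k :
  hdot_pair s f g k = sqrte (hdot2 (s + 1) f k + hdot2 s g k).
Proof. by rewrite /hdot_pair poweR12_sqrt // adde_ge0 ?hdot2_ge0. Qed.

Section data.
Variables (s : R) (u0 u1 : cfield).
Hypothesis data : in_hdot_pair s u0 u1.

Lemma data_density_ge0 xi : 0 <= data_density s u0 u1 xi.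
Proof. by apply: sumr_ge0 => j _; rewrite addr_ge0 // mulr_ge0 ?powR_ge0 ?cabs2_ge0. Qed.

Lemma measurable_data_density : measurable_fun setT (data_density s u0 u1).
Proof.
apply: measurable_sum => j; have [m0 m1 _ _] := data j.
by apply: measurable_funD; exact: measurable_weighted_cabs2.
Qed.

Lemma integral_data_density :
  (\int[@leb3 R]_(xi in setT) (data_density s u0 u1 xi)%:E =
   \sum_(j < 3) (hdot2 (s + 1) u0 j + hdot2 s u1 j))%E.
Proof.
under eq_integral do rewrite /data_density -sumEFin.
rewrite ge0_integral_sum //; last by move=> j xi _; rewrite EFinD adde_ge0 ?weighted_cabs2_ge0.
  apply: eq_bigr => j _; have [m0 m1 _ _] := data j.
  under eq_integral do rewrite EFinD.
  rewrite ge0_integralD //; by [move=> *; exact: weighted_cabs2_ge0 |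
    apply/measurable_EFinP; exact: measurable_weighted_cabs2].
move=> j; have [m0 m1 _ _] := data j; apply/measurable_EFinP.
by apply: measurable_funD; exact: measurable_weighted_cabs2.
Qed.

Lemma hdot2_le_data (r K : R) (v : cfield) (k : 'I_3) : 0 <= K ->
  (forall xi, norm3 xi `^ (2 * r) * cabs2 v xi k <= K * data_density s u0 u1 xi) ->
  (hdot2 r v k <= K%:E * \sum_(j < 3) (hdot2 (s + 1) u0 j + hdot2 s u1 j))%E.
Proof.
move=> K0 v_le; rewrite -integral_data_density -ge0_integralZl_EFin //.
- by apply: ge0_le_integralT => xi; rewrite ?weighted_cabs2_ge0 // -EFinM lee_fin.
- by move=> xi _; rewrite lee_fin data_density_ge0.
- by apply/measurable_EFinP; exact: measurable_data_density.
Qed.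
End data.
End sobolev_norms.

Theorem theorem3p2 (R : realType) (a b theta s : R) :
  0 < a ^+ 2 -> a ^+ 2 < b ^+ 2 -> 0 <= theta <= 1 -> 0 <= s ->
  exists C : R, 0 <= C /\
    forall (u0 u1 : cfield R) (U Ut : R -> cfield R),
      in_hdot_pair s u0 u1 ->
      is_lame_solution a b theta u0 u1 U Ut ->
      forall (k : 'I_3) (t : R), 0 <= t ->
        (hdot (s + 1) (U t) k + hdot s (Ut t) k
          <= C%:E * \sum_(j < 3) hdot_pair s u0 u1 j)%E.
Proof.
move=> a2_gt0 a2_lt_b2 _ s0; set K := lame_const a b.
have K0 : 0 <= K by rewrite mulr_ge0 ?addr_ge0 ?invr_ge0 ?sqr_ge0 ?ltW.
exists (2 * Num.sqrt K); split; first by rewrite mulr_ge0 ?sqrtr_ge0.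
move=> u0 u1 U Ut data sol k t t0.
set S := \sum_(j < 3) (hdot2 (s + 1) u0 j + hdot2 s u1 j).
have S0 : (0 <= S)%E by rewrite sume_ge0 // => j _; rewrite adde_ge0 ?hdot2_ge0.
have energy_bound xi := lame_weighted_estimate a2_gt0 (ltW a2_lt_b2) sol xi k s0 t0.
have hdot_le r v :
    (forall xi, norm3 xi `^ (2 * r) * cabs2 v xi k <= K * data_density s u0 u1 xi) ->
    (hdot r v k <= (Num.sqrt K)%:E * sqrte S)%E.
  move=> /(hdot2_le_data data K0); rewrite -/S -lee_sqrt ?mule_ge0 //.
  by rewrite hdotE sqrteM.
have hU : (hdot (s + 1) (U t) k <= (Num.sqrt K)%:E * sqrte S)%E.
  apply: hdot_le => xi; apply: le_trans (energy_bound xi).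
  by rewrite lerDl mulr_ge0 ?powR_ge0 ?cabs2_ge0.
have hUt : (hdot s (Ut t) k <= (Num.sqrt K)%:E * sqrte S)%E.
  apply: hdot_le => xi; apply: le_trans (energy_bound xi).
  by rewrite lerDr mulr_ge0 ?powR_ge0 ?cabs2_ge0.
apply: le_trans (leeD hU hUt) _.
rewrite mulr_natl mulr2n EFinD ge0_muleDl ?lee_fin ?sqrtr_ge0 //.
have sqrtS_le : (sqrte S <= \sum_(j < 3) hdot_pair s u0 u1 j)%E.
  rewrite (eq_bigr _ (fun j _ => hdot_pairE s u0 u1 j)).
  by apply: sqrte_sum_le => j; rewrite adde_ge0 ?hdot2_ge0.
by apply: leeD; apply: lee_wpmul2l; rewrite ?lee_fin ?sqrtr_ge0.
Qed.
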